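(* Let $K$ be either of the (two non-isomorphic) $2$-uniform tilings of the plane whose vertex types are $[3^6]$ and $[3^3,4^2]$. If $X$ is a map on the torus that is a quotient $X=K/\Gamma$ of $K$, then the vertices of $X$ form exactly $2$ orbits under ${\rm Aut}(X)$.
   Context: A map is a polyhedral map: a cellular embedding of a connected graph in a closed surface such that the intersection of any two distinct faces is empty, a single vertex, or a single edge. For a vertex $u$, the faces containing $u$ form a cyclic sequence (the face-cycle at $u$); if this cyclic sequence consists of consecutive blocks of $n_1$ $p_1$-gons, then $n_2$ $p_2$-gons, ..., then $n_k$ $p_k$-gons, with cyclically consecutive $p_i$ distinct, then $u$ is said to have type $[p_1^{n_1},\dots,p_k^{n_k}]$ (defined up to cyclic shift and reversal). A $2$-uniform tiling is an edge-to-edge tiling of the Euclidean plane $\mathbb{R}^2$ by regular polygons whose symmetry group has exactly two orbits on the set of vertices; viewed as a map on the plane, its vertices have (at most) two types, listed as $[W;Z]$. (Up to isomorphism there are exactly $20$ such tilings.) For a map $K$ on the plane, a quotient of $K$ on the torus is a map $X$ on the torus together with a polyhedral covering map $\eta:K\to X$ with $X=K/\Gamma$, where $\Gamma\le {\rm Aut}(K)$ is a subgroup acting without fixed vertices, edges or faces and $K/\Gamma$ is homeomorphic to the torus. ${\rm Aut}(X)$ denotes the automorphism group of the map $X$, acting on its vertex set $V(X)$. *)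

From mathcomp Require Import all_boot all_order all_algebra all_fingroup.
Set Implicit Arguments. Unset Strict Implicit. Unset Printing Implicit Defensive.
Import GRing.Theory Num.Theory.
Local Open Scope ring_scope.

(* A face is given by its boundary cycle: a duplicate-free sequence of *)
(* vertices, read cyclically.                                          *)

Definition dedge (T : eqType) (f : seq T) (u v : T) : bool :=
  (u \in f) && (next f u == v).

Definition uedge (T : eqType) (f : seq T) (u v : T) : bool :=
  dedge f u v || dedge f v u.

Definition cyc_eq (T : eqType) (s t : seq T) : Prop :=
  exists n : nat, t = rot n s \/ t = rot n (rev s).

Section FinMap.
Variables (V : finType) (n : nat) (face : 'I_n -> seq V).

Definition fadj (u v : V) : bool := [exists i, uedge (face i) u v].

Definition link_rel (v : V) (i j : 'I_n) : bool :=
  [&& v \in face i, v \in face j &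
      [exists w, uedge (face i) v w && uedge (face j) v w]].

Definition orient (o : 'I_n -> bool) (i : 'I_n) : seq V :=
  if o i then face i else rev (face i).

Definition is_torus_polyhedral_map : Prop :=
  (forall i, uniq (face i) /\ (3 <= size (face i))%N) /\
  (forall i j, perm_eq (face i) (face j) -> i = j) /\
  (forall u v, fadj u v -> #|[set i | uedge (face i) u v]| = 2%N) /\
  (* every vertex lies on a face, and the faces around a vertex form a
     single cycle (closed surface) *)
  (forall v, exists i, v \in face i) /\
  (forall v i j, v \in face i -> v \in face j -> connect (link_rel v) i j) /\
  (forall u v, connect fadj u v) /\
  (forall i j, i != j ->
     let C := [set w | (w \in face i) && (w \in face j)] in
     (#|C| <= 1)%N \/
     exists u v, [/\ C = [set u; v], uedge (face i) u v & uedge (face j) u v]) /\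
  (exists o : 'I_n -> bool, forall i j u v, i != j ->
     dedge (orient o i) u v -> dedge (orient o j) u v -> False) /\
  (* Euler characteristic 0:  2 (V + F) = 2 E *)
  (2 * (#|V| + n) = #|[set p : V * V | fadj p.1 p.2]|)%N.

Definition fin_map_aut (a : {perm V}) : Prop :=
  (forall u v, fadj (a u) (a v) = fadj u v) /\
  (forall i, exists j, perm_eq (map a (face i)) (face j)).

Definition same_aut_orbit (u v : V) : Prop :=
  exists a : {perm V}, fin_map_aut a /\ a u = v.

End FinMap.

(* Vertices are Z x Z: (i, j) is the i-th vertex on the j-th horizontal *)
(* line.  The strip between lines j and j+1 is a strip of squares when  *)
(* j = 0 mod (k+1) and a strip of triangles otherwise, so square strips *)
(* are separated by k strips of triangles.  Triangle strips are given   *)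
(* in sheared coordinates.  k = 2 and k = 3 give the two tilings.       *)
Definition vtx := (int * int)%type.

Definition sq_strip (k : nat) (j : int) : bool := ((j %% (k.+1)%:Z)%Z == 0).

Definition tiling_face (k : nat) (f : seq vtx) : Prop :=
  exists i j : int,
    if sq_strip k j then f = [:: (i, j); (i + 1, j); (i + 1, j + 1); (i, j + 1)]
    else f = [:: (i, j); (i + 1, j); (i, j + 1)] \/
         f = [:: (i + 1, j); (i + 1, j + 1); (i, j + 1)].

Definition tiling_adj (k : nat) (u v : vtx) : Prop :=
  exists f, tiling_face k f /\ uedge f u v.

Definition tiling_faceset (k : nat) (s : seq vtx) : Prop :=
  exists f, tiling_face k f /\ perm_eq s f.

Definition tiling_aut (k : nat) (a : vtx -> vtx) : Prop :=
  exists b : vtx -> vtx, [/\ cancel a b, cancel b a,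
    (forall u v, tiling_adj k u v <-> tiling_adj k (a u) (a v)) &
    (forall s, tiling_faceset k s <-> tiling_faceset k (map a s))].

Definition free_aut_subgroup (k : nat) (G : (vtx -> vtx) -> Prop) : Prop :=
  [/\ G (fun x => x),
      (forall a b, G a -> G b -> G (fun x => a (b x))),
      (forall a, G a -> exists b, [/\ G b, cancel a b & cancel b a]),
      (forall a, G a -> tiling_aut k a) &
      (forall a, G a ->
         ((exists u, a u = u) \/
          (exists u v, [/\ tiling_adj k u v, a u = v & a v = u]) \/
          (exists f, tiling_face k f /\ perm_eq (map a f) f)) ->
         forall x, a x = x)].

(* eta : V(K) -> V(X) exhibits the finite map (V, face) as K / G:
   vertices, edges and faces of X are the G-orbits of those of K,
   with faces of X the images of faces of K. *)
Definition is_quotient_map (k : nat) (G : (vtx -> vtx) -> Prop)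
    (V : finType) (n : nat) (face : 'I_n -> seq V) (eta : vtx -> V) : Prop :=
  (forall x : V, exists u, eta u = x) /\
  (forall u v, eta u = eta v <-> exists a, G a /\ a u = v) /\
  (forall a b c d, tiling_adj k a b -> tiling_adj k c d ->
     ([set eta a; eta b] = [set eta c; eta d] <->
      exists g, G g /\ ((g a = c /\ g b = d) \/ (g a = d /\ g b = c)))) /\
  (forall f, tiling_face k f -> exists i, cyc_eq (map eta f) (face i)) /\
  (forall i, exists f, tiling_face k f /\ cyc_eq (map eta f) (face i)) /\
  (forall f g, tiling_face k f -> tiling_face k g ->
     (perm_eq (map eta f) (map eta g) <->
      exists a, G a /\ perm_eq (map a f) g)).

(* The adjacency graph of K is rigid: an automorphism fixing (0, 0) is the
   identity or a mirror, so every automorphism of K is a translation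
   (i, j) -> (i + p, j + q) with q = 0 mod k+1, a point reflection
   (i, j) -> (p - i, q - j) with q = 1 mod k+1, or one of these composed with
   a mirror.  A point reflection fixes a vertex, an edge or a square of K, so
   it is not in the freely acting group G; a coherent orientation of the torus
   X lifts to K and gives all squares the same sign, so G contains no
   orientation-reversing map either.  Hence G consists of translations, and
   all translations and point reflections of K normalise G and descend to
   automorphisms of X.  These act transitively on the images of the rows
   0, 1 mod k+1 (vertices on squares) and on the images of the other rows
   (vertices on triangles only), and no automorphism of X can exchange the
   two kinds. *)

From mathcomp Require Import all_boot all_order all_algebra.
From mathcomp Require Import all_fingroup zify.
Set Implicit Arguments.
Unset Strict Implicit.
Unset Printing Implicit Defensive.
Import GRing.Theory Num.Theory.
Local Open Scope ring_scope.

(** * Directed edges of cyclic sequences *)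

Section CycleEdges.
Variables T T' : eqType.
Implicit Types (a b c d u v x y : T) (s t : seq T).

Lemma dedge3E a b c u v : dedge [:: a; b; c] u v ->
  [\/ u = a /\ v = b, u = b /\ v = c | u = c /\ v = a].
Proof.
rewrite /dedge /= !inE => /andP[Hu].
case: (u =P a) => [->/eqP->|/eqP/negbTE ua]; first by constructor 1.
case: (u =P b) => [->/eqP->|/eqP/negbTE ub]; first by constructor 2.
case: (u =P c) => [->/eqP->|/eqP/negbTE uc]; first by constructor 3.
by move: Hu; rewrite ua ub uc.
Qed.

Lemma dedge4E a b c d u v : dedge [:: a; b; c; d] u v ->
  [\/ u = a /\ v = b, u = b /\ v = c, u = c /\ v = d | u = d /\ v = a].
Proof.
rewrite /dedge /= !inE => /andP[Hu].
case: (u =P a) => [->/eqP->|/eqP/negbTE ua]; first by constructor 1.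
case: (u =P b) => [->/eqP->|/eqP/negbTE ub]; first by constructor 2.
case: (u =P c) => [->/eqP->|/eqP/negbTE uc]; first by constructor 3.
case: (u =P d) => [->/eqP->|/eqP/negbTE ud]; first by constructor 4.
by move: Hu; rewrite ua ub uc ud.
Qed.

Lemma dedge_next s x : x \in s -> dedge s x (next s x).
Proof. by rewrite /dedge eqxx andbT. Qed.

Lemma dedge3 a b c : uniq [:: a; b; c] ->
  [/\ dedge [:: a; b; c] a b, dedge [:: a; b; c] b c & dedge [:: a; b; c] c a].
Proof.
rewrite /= !inE !negb_or => /and3P[/andP[ab ac] bc _].
rewrite /dedge /= !inE !eqxx /= ?orbT /=.
by rewrite !ifN_eqC // !eqxx.
Qed.

Lemma dedge4 a b c d : uniq [:: a; b; c; d] ->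
  [/\ dedge [:: a; b; c; d] a b, dedge [:: a; b; c; d] b c,
      dedge [:: a; b; c; d] c d & dedge [:: a; b; c; d] d a].
Proof.
rewrite /= !inE !negb_or => /and4P[/and3P[ab ac ad] /andP[bc bd] cd _].
rewrite /dedge /= !inE !eqxx /= ?orbT /=.
by rewrite !ifN_eqC // !eqxx.
Qed.

Lemma dedge_rot n s x y : uniq s -> dedge (rot n s) x y = dedge s x y.
Proof. by move=> Us; rewrite /dedge mem_rot next_rot. Qed.

Lemma dedge_rev s x y : uniq s -> dedge (rev s) x y = dedge s y x.
Proof.
move=> Us; rewrite /dedge mem_rev next_rev //.
apply/andP/andP => [[xs /eqP <-]|[ys /eqP <-]].
  by rewrite mem_prev xs next_prev.
by rewrite mem_next ys prev_next.
Qed.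

Lemma dedge_mem s x y : dedge s x y -> x \in s /\ y \in s.
Proof. by rewrite /dedge => /andP[xs /eqP <-]; rewrite mem_next xs. Qed.

Lemma cyc_eq_perm s t : cyc_eq s t -> perm_eq s t.
Proof. by case=> n [->|->]; rewrite perm_sym perm_rot ?perm_rev. Qed.

Lemma cyc_eq_uniq s t : cyc_eq s t -> uniq t -> uniq s.
Proof. by move/cyc_eq_perm/perm_uniq ->. Qed.

Lemma cyc_eq_dedge s t : uniq s -> cyc_eq s t -> exists b : bool,
  forall x y, dedge s x y = dedge t (if b then x else y) (if b then y else x).
Proof.
move=> Us [n [->|->]]; first by exists true => x y; rewrite dedge_rot.
by exists false => x y; rewrite dedge_rot ?rev_uniq // dedge_rev.
Qed.

Lemma cyc_eq_uedge s t x y : uniq s -> cyc_eq s t -> uedge t x y = uedge s x y.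
Proof.
by move=> Us /(cyc_eq_dedge Us) [[] E]; rewrite /uedge !E // orbC.
Qed.

Lemma uniq_map_inj_in (h : T -> T') s : uniq (map h s) -> {in s &, injective h}.
Proof.
elim: s => //= z s IH /andP[hz_s Uhs] x y; rewrite !inE.
case/predU1P=> [->|xs] /predU1P[->|ys] // E.
- by move: hz_s; rewrite E map_f.
- by move: hz_s; rewrite -E map_f.
- exact: IH.
Qed.

Lemma next_map_in (h : T -> T') s x : uniq (map h s) -> x \in s ->
  next (map h s) (h x) = h (next s x).
Proof.
move=> Uhs xs; have Us := map_uniq Uhs.
case/rot_to: xs => i s' def_s.
rewrite -(next_rot i Us) -(next_rot i Uhs) -map_rot def_s /=.
by case: s' {def_s} => [|y s''] /=; rewrite !eqxx.
Qed.

Lemma dedge_map_in (h : T -> T') s u v : uniq (map h s) -> dedge s u v ->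
  dedge (map h s) (h u) (h v).
Proof.
move=> Uhs /andP[us /eqP <-].
by rewrite /dedge map_f //= next_map_in.
Qed.

Lemma dedge_mapP (h : T -> T') s (x y : T') : uniq (map h s) ->
  dedge (map h s) x y -> exists u v, [/\ dedge s u v, h u = x & h v = y].
Proof.
move=> Uhs /andP[/mapP[u us ->] /eqP <-].
by exists u, (next s u); rewrite dedge_next // next_map_in.
Qed.

Lemma uedge_map_in (h : T -> T') s u v : uniq (map h s) -> uedge s u v ->
  uedge (map h s) (h u) (h v).
Proof. by move=> Uhs /orP[] /(dedge_map_in Uhs) D; rewrite /uedge D ?orbT. Qed.

Lemma uedge_mapP (h : T -> T') s (x y : T') : uniq (map h s) ->
  uedge (map h s) x y -> exists u v, [/\ uedge s u v, h u = x & h v = y].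
Proof.
move=> Uhs /orP[] /(dedge_mapP Uhs) [u [v [D <- <-]]].
  by exists u, v; rewrite /uedge D.
by exists v, u; rewrite /uedge D orbT.
Qed.

Lemma dedge_antisym s x y : uniq s -> (2 < size s)%N ->
  dedge s x y -> dedge s y x -> False.
Proof.
move=> Us s3 /[dup] /dedge_mem[xs _] Dxy Dyx.
case/rot_to: xs => r s' def_s.
have Ur : uniq (x :: s') by rewrite -def_s rot_uniq.
have s3' : (1 < size s')%N by move: s3; rewrite -(size_rot r) def_s.
rewrite -(dedge_rot r x y Us) def_s in Dxy.
rewrite -(dedge_rot r y x Us) def_s in Dyx; clear def_s.
case: s' s3' Ur Dxy Dyx => [|y' [|z s'']] //= _.
rewrite /dedge /= !inE !eqxx /= => /and3P[/norP[xy' /norP[xz _]] _ _] /eqP <-.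
by rewrite eq_sym (negbTE xy') eqxx /= => /eqP zx; rewrite zx eqxx in xz.
Qed.

End CycleEdges.

(** * The tilings *)

Lemma int_ind_step (P : int -> Prop) :
  P 0 -> (forall i, P i -> P (i + 1)) -> (forall i, P i -> P (i - 1)) ->
  forall i, P i.
Proof.
move=> P0 Pup Pdn; elim/int_rect => // m Pm.
  by rewrite (_ : m.+1%:Z = m%:Z + 1); [apply: Pup | lia].
by rewrite (_ : - m.+1%:Z = - m%:Z - 1); [apply: Pdn | lia].
Qed.

Lemma int_ind_pair (P : int -> Prop) : P 0 -> P 1 ->
  (forall i, P i -> P (i + 1) -> P (i + 2)) ->
  (forall i, P i -> P (i + 1) -> P (i - 1)) ->
  forall i, P i.
Proof.
move=> P0 P1 Pup Pdn i.
suff [] : P i /\ P (i + 1) by [].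
elim/int_ind_step: i => [|i [Pi Pi1]|i [Pi Pi1]]; first by rewrite add0r.
  by split=> //; rewrite -addrA; apply: Pup.
by rewrite subrK; split=> //; apply: Pdn.
Qed.

Lemma pair_neq (a b a' b' : int) : (a, b) <> (a', b') -> ~ (a = a' /\ b = b').
Proof. by move=> ne [Ea Eb]; apply: ne; rewrite Ea Eb. Qed.

Lemma pair_eqI (a b a' b' : int) : a = a' -> b = b' -> (a, b) = (a', b').
Proof. by move=> -> ->. Qed.

Definition sq_face (i j : int) : seq vtx :=
  [:: (i, j); (i + 1, j); (i + 1, j + 1); (i, j + 1)].
Definition tri_lo (i j : int) : seq vtx := [:: (i, j); (i + 1, j); (i, j + 1)].
Definition tri_hi (i j : int) : seq vtx :=
  [:: (i + 1, j); (i + 1, j + 1); (i, j + 1)].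

Definition kadj (k : nat) (u v : vtx) : Prop :=
  (v.2 = u.2 /\ (v.1 = u.1 + 1 \/ v.1 = u.1 - 1)) \/
  (v.2 = u.2 + 1 /\ (v.1 = u.1 \/ (~~ sq_strip k u.2 /\ v.1 = u.1 - 1))) \/
  (v.2 = u.2 - 1 /\ (v.1 = u.1 \/ (~~ sq_strip k (u.2 - 1) /\ v.1 = u.1 + 1))).

Ltac split_hyps := repeat match goal with
  | H : (_, _) <> (_, _) |- _ => move/pair_neq: H => H
  | H : _ \/ _ |- _ => destruct H
  | H : _ /\ _ |- _ => destruct H
  | H : ?x = _ |- _ => is_var x; subst x
  end.

Ltac eval_strips := repeat match goal with
  | |- context [sq_strip ?k ?x] =>
    let b := eval vm_compute in (sq_strip k x) in
    lazymatch b with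
    | true => change (sq_strip k x) with true
    | false => change (sq_strip k x) with false
    | _ => case: (sq_strip k x)
    end
  end; rewrite /=.

Ltac revert_all := repeat match goal with H : _ |- _ => revert H end.

(* For [kadj] goals at explicit vertices once [k] is a numeral.  It must not
   meet a disjunctive section hypothesis, which [split_hyps] would destruct
   forever; hence the lemmas below take [hk] as an argument. *)
Ltac kadj_lia := intros; split_hyps;
  repeat match goal with
    | |- _ /\ _ => split
    | |- (_, _) = (_, _) => apply: pair_eqI
    end;
  revert_all; eval_strips; intros; split_hyps; lia.

Ltac kadj_solve := rewrite /kadj /=; first
  [ left; split; [lia | first [left; lia | right; lia]]
  | right; left; split;
    [lia | first [left; lia | right; split; [done | lia]]]
  | right; right; split;
    [lia | first [left; lia | right; split; [done | lia]]] ].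

Section TilingAdjacency.
Variable k : nat.

Lemma tiling_faceE f : tiling_face k f ->
  (exists i j, sq_strip k j /\ f = sq_face i j) \/
  (exists i j, ~~ sq_strip k j /\ (f = tri_lo i j \/ f = tri_hi i j)).
Proof.
case=> i [j]; case: ifP => Sj H; first by left; exists i, j.
by right; exists i, j; rewrite Sj.
Qed.

Lemma sq_face_tiling i j : sq_strip k j -> tiling_face k (sq_face i j).
Proof. by move=> Sj; exists i, j; rewrite Sj. Qed.

Lemma tri_lo_tiling i j : ~~ sq_strip k j -> tiling_face k (tri_lo i j).
Proof. by move=> Sj; exists i, j; rewrite (negbTE Sj); left. Qed.

Lemma tri_hi_tiling i j : ~~ sq_strip k j -> tiling_face k (tri_hi i j).
Proof. by move=> Sj; exists i, j; rewrite (negbTE Sj); right. Qed.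

Lemma sq_face_uniq i j : uniq (sq_face i j).
Proof. rewrite /= !inE !xpair_eqE /=; lia. Qed.

Lemma tri_lo_uniq i j : uniq (tri_lo i j).
Proof. rewrite /= !inE !xpair_eqE /=; lia. Qed.

Lemma tri_hi_uniq i j : uniq (tri_hi i j).
Proof. rewrite /= !inE !xpair_eqE /=; lia. Qed.

Lemma tiling_face_size f : tiling_face k f -> (2 < size f)%N.
Proof. by case/tiling_faceE => [[i [j [_ ->]]]|[i [j [_ [->|->]]]]]. Qed.

Lemma tiling_face_size4 f : tiling_face k f -> size f = 4%N ->
  exists i j, sq_strip k j /\ f = sq_face i j.
Proof.
by case/tiling_faceE => [[i [j [Sj ->]]]|[i [j [_ [->|->]]]]] // _; exists i, j.
Qed.

Lemma kadj_sym u v : kadj k u v -> kadj k v u.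
Proof.
case: u v => [i j] [i' j']; rewrite /kadj /=.
case=> [[-> [->|->]]|[[-> [->|[S ->]]]|[-> [->|[S ->]]]]];
  try (by left; split; [|lia]); right.
- by right; split; [lia | left].
- by right; split; [lia | right; rewrite addrK; split; [|lia]].
- by left; split; [lia | left].
- by left; split; [lia | right; split; [|lia]].
Qed.

Lemma tiling_face_kadj f u v : tiling_face k f -> uedge f u v -> kadj k u v.
Proof.
move=> Hf; wlog: u v / dedge f u v.
  by move=> W /orP[] D; [|apply: kadj_sym]; apply: W; rewrite /uedge D ?orbT.
move=> D _; case/tiling_faceE: Hf => [[i [j [Sj Ef]]]|[i [j [Sj [Ef|Ef]]]]];
  subst f; [case/dedge4E: D | case/dedge3E: D | case/dedge3E: D];
  move=> [-> ->]; rewrite /kadj /= ?addrK; lia.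
Qed.

Lemma kadj_tiling_face u v :
  kadj k u v -> exists f, tiling_face k f /\ uedge f u v.
Proof.
wlog: u v / (v.2 = u.2 /\ v.1 = u.1 + 1) \/
    (v.2 = u.2 + 1 /\ (v.1 = u.1 \/ (~~ sq_strip k u.2 /\ v.1 = u.1 - 1))).
  move=> W A; have Wsym : (u.2 = v.2 /\ u.1 = v.1 + 1) \/
      (u.2 = v.2 + 1 /\ (u.1 = v.1 \/ (~~ sq_strip k v.2 /\ u.1 = v.1 - 1))) ->
      exists f, tiling_face k f /\ uedge f u v.
    move=> C; have [f [Hf Hvu]] := W v u C (kadj_sym A).
    by exists f; rewrite /uedge orbC.
  move: (A); rewrite {1}/kadj.
  case=> [[E [E'|E']]|[E|[E [E'|[S E']]]]].
  - by apply: W => //; left.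
  - by apply: Wsym; left; split; lia.
  - by apply: W => //; right.
  - by apply: Wsym; right; split; [lia | left; lia].
  - by apply: Wsym; right; split; [lia | right; split; [rewrite E | lia]].
case: u v => [i j] [i' j'] /=.
case=> [[-> ->]|[-> [->|[S ->]]]] _.
- case Sj: (sq_strip k j).
    exists (sq_face i j); split; first exact: sq_face_tiling.
    by case/dedge4: (sq_face_uniq i j) => D _ _ _; rewrite /uedge D.
  exists (tri_lo i j); split; first by apply: tri_lo_tiling; rewrite Sj.
  by case/dedge3: (tri_lo_uniq i j) => D _ _; rewrite /uedge D.
- case Sj: (sq_strip k j).
    exists (sq_face i j); split; first exact: sq_face_tiling.
    by case/dedge4: (sq_face_uniq i j) => _ _ _ D; rewrite /uedge D orbT.
  exists (tri_lo i j); split; first by apply: tri_lo_tiling; rewrite Sj.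
  by case/dedge3: (tri_lo_uniq i j) => _ _ D; rewrite /uedge D orbT.
- exists (tri_hi (i - 1) j); split; first exact: tri_hi_tiling.
  case/dedge3: (tri_hi_uniq (i - 1) j) => _ _.
  by rewrite /tri_hi subrK /uedge => ->; rewrite orbT.
Qed.

Lemma tiling_adjE u v : tiling_adj k u v <-> kadj k u v.
Proof.
split; first by case=> f [Hf Huv]; apply: tiling_face_kadj Huv.
exact: kadj_tiling_face.
Qed.

End TilingAdjacency.

Ltac kadj_decide hk := rewrite /kadj /=; case: hk => ->; eval_strips; lia.

Lemma sq_strip0 k : sq_strip k 0.
Proof. by rewrite /sq_strip mod0z. Qed.

Lemma sq_face_row k (hk : k = 2%N \/ k = 3%N) i j x : sq_strip k j ->
  x \in sq_face i j -> (x.2 %% (k.+1)%:Z)%Z = 0 \/ (x.2 %% (k.+1)%:Z)%Z = 1.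
Proof.
by case: x => a b; rewrite /sq_strip !inE !xpair_eqE /=; case: hk => ->; lia.
Qed.

(** * Rigidity of the adjacency graph *)

Lemma common_nbr_10_01 k (hk : k = 2%N \/ k = 3%N) x :
  kadj k (1, 0) x -> kadj k (0, 1) x -> x <> (0, 0) -> x = (1, 1).
Proof. case: x => a b; rewrite /kadj /=; case: hk => ->; kadj_lia. Qed.

Lemma common_nbr_m10_01 k (hk : k = 2%N \/ k = 3%N) x :
  kadj k (-1, 0) x -> kadj k (0, 1) x -> x <> (0, 0) -> x = (-1, 1).
Proof. case: x => a b; rewrite /kadj /=; case: hk => ->; kadj_lia. Qed.

Lemma common_nbr_00_10 k (hk : k = 2%N \/ k = 3%N) x :
  kadj k (0, 0) x -> kadj k (1, 0) x -> x = (1, -1).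
Proof. case: x => a b; rewrite /kadj /=; case: hk => ->; kadj_lia. Qed.

Lemma no_common_nbr_00_01 k (hk : k = 2%N \/ k = 3%N) x :
  kadj k (0, 0) x -> kadj k (0, 1) x -> False.
Proof. case: x => a b; rewrite /kadj /=; case: hk => ->; kadj_lia. Qed.

Lemma nbr_00 k (hk : k = 2%N \/ k = 3%N) x : kadj k (0, 0) x -> x <> (0, 1) ->
  [\/ x = (1, 0), x = (-1, 0), x = (0, -1) | x = (1, -1)].
Proof.
case: x => a b A N.
have : (a = 1 /\ b = 0 \/ a = -1 /\ b = 0) \/
       (a = 0 /\ b = -1 \/ a = 1 /\ b = -1).
  by move: A N; rewrite /kadj /=; case: hk => ->; kadj_lia.
by case=> -[] [-> ->]; [constructor 1 | constructor 2 | constructor 3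
  | constructor 4].
Qed.

Lemma strip0_nbr_right k (hk : k = 2%N \/ k = 3%N) i x y :
  kadj k (i + 1, 0) x -> kadj k (i + 1, 1) y -> kadj k x y ->
  x <> (i + 1, 1) -> x <> (i, 0) -> y <> (i + 1, 0) -> y <> (i, 1) ->
  x = (i + 2, 0) /\ y = (i + 2, 1).
Proof.
case: x y => a b [a' b']; rewrite /kadj /=; case: hk => -> A B C *.
all: move: C; eval_strips; split_hyps; try (exfalso; lia); kadj_lia.
Qed.

Lemma strip0_nbr_left k (hk : k = 2%N \/ k = 3%N) i x y :
  kadj k (i, 0) x -> kadj k (i, 1) y -> kadj k x y ->
  x <> (i + 1, 0) -> x <> (i, 1) -> y <> (i + 1, 1) -> y <> (i, 0) ->
  x = (i - 1, 0) /\ y = (i - 1, 1).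
Proof.
case: x y => a b [a' b']; rewrite /kadj /=; case: hk => -> A B C *.
all: move: C; eval_strips; split_hyps; try (exfalso; lia); kadj_lia.
Qed.

Lemma nbr_row_above k i j x : kadj k (i, j + 1) x ->
  (~~ sq_strip k (j + 1) -> kadj k (i + 1, j + 1) x) ->
  x.2 <> j -> x.2 <> j + 1 -> x = (i, j + 2).
Proof. case: x => a b; rewrite /kadj /=; kadj_lia. Qed.

Lemma nbr_row_below k i j x : kadj k (i, j) x ->
  (~~ sq_strip k (j - 1) -> kadj k (i - 1, j) x) ->
  x.2 <> j -> x.2 <> j + 1 -> x = (i, j - 1).
Proof. case: x => a b; rewrite /kadj /=; kadj_lia. Qed.

Section Rigidity.
Variable k : nat.
Hypothesis hk : k = 2%N \/ k = 3%N.
Variable c : vtx -> vtx.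
Hypothesis cinj : injective c.
Hypothesis cadj : forall u v, kadj k u v -> kadj k (c u) (c v).

Let fixed_kadj u v : c u = u -> kadj k u v -> kadj k u (c v).
Proof. by move=> cu /cadj; rewrite cu. Qed.

Let fixed_neq x y : c y = y -> x <> y -> c x <> y.
Proof. by move=> cy xy cxy; apply: xy; apply: cinj; rewrite cxy cy. Qed.

Let fixes_col i := c (i, 0) = (i, 0) /\ c (i, 1) = (i, 1).
Let fixes_row j := forall i, c (i, j) = (i, j).

Let fixes_col_right i : fixes_col i -> fixes_col (i + 1) -> fixes_col (i + 2).
Proof.
move=> [c0 c1] [c10 c11].
have A : kadj k (i + 1, 0) (c (i + 2, 0)).
  by apply: fixed_kadj c10 _; kadj_solve.
have B : kadj k (i + 1, 1) (c (i + 2, 1)).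
  by apply: fixed_kadj c11 _; kadj_solve.
have C : kadj k (c (i + 2, 0)) (c (i + 2, 1)) by apply: cadj; kadj_solve.
by apply: (strip0_nbr_right hk A B C); apply: fixed_neq => // -[]; lia.
Qed.

Let fixes_col_left i : fixes_col i -> fixes_col (i + 1) -> fixes_col (i - 1).
Proof.
move=> [c0 c1] [c10 c11].
have A : kadj k (i, 0) (c (i - 1, 0)) by apply: fixed_kadj c0 _; kadj_solve.
have B : kadj k (i, 1) (c (i - 1, 1)) by apply: fixed_kadj c1 _; kadj_solve.
have C : kadj k (c (i - 1, 0)) (c (i - 1, 1)) by apply: cadj; kadj_solve.
by apply: (strip0_nbr_left hk A B C); apply: fixed_neq => // -[]; lia.
Qed.

Let fixes_row_stable j x : fixes_row j -> x.2 <> j -> (c x).2 <> j.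
Proof.
move=> Rj xj cxj; apply: xj; suff <- : c x = x by [].
by apply: cinj; move: cxj; case: (c x) => a b /= ->; apply: Rj.
Qed.

Let fixes_row_up j : fixes_row j -> fixes_row (j + 1) -> fixes_row (j + 2).
Proof.
move=> Rj Rj1 i; apply: (nbr_row_above (k := k)).
- by apply: fixed_kadj; [apply: Rj1 | kadj_solve].
- by move=> S; apply: fixed_kadj; [apply: Rj1 | kadj_solve].
- by apply: fixes_row_stable => //=; lia.
- by apply: fixes_row_stable => //=; lia.
Qed.

Let fixes_row_down j : fixes_row j -> fixes_row (j + 1) -> fixes_row (j - 1).
Proof.
move=> Rj Rj1 i; apply: (nbr_row_below (k := k)).
- by apply: fixed_kadj; [apply: Rj | kadj_solve].
- by move=> S; apply: fixed_kadj; [apply: Rj | kadj_solve].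
- by apply: fixes_row_stable => //=; lia.
- by apply: fixes_row_stable => //=; lia.
Qed.

Lemma kadj_rigid :
  c (0, 0) = (0, 0) -> c (1, 0) = (1, 0) -> c (0, 1) = (0, 1) ->
  forall x, c x = x.
Proof.
move=> c00 c10 c01.
have c11 : c (1, 1) = (1, 1).
  apply: (common_nbr_10_01 hk); last by apply: fixed_neq c00 _ => -[].
    by rewrite -c10; apply: cadj; kadj_solve.
  by rewrite -c01; apply: cadj; kadj_solve.
have cols : forall i, fixes_col i.
  by apply: int_ind_pair; [split | split | apply: fixes_col_right
    | apply: fixes_col_left].
have rows : forall j, fixes_row j.
  apply: int_ind_pair; [by move=> i; case: (cols i)
    | by move=> i; case: (cols i) | exact: fixes_row_up
    | exact: fixes_row_down].
by case=> i j; apply: rows.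
Qed.

End Rigidity.

Section Stabilizer.
Variable k : nat.
Hypothesis hk : k = 2%N \/ k = 3%N.
Variables c c' : vtx -> vtx.
Hypotheses (cK : cancel c c') (cK' : cancel c' c).
Hypothesis cadjE : forall u v, kadj k (c u) (c v) <-> kadj k u v.
Hypothesis c00 : c (0, 0) = (0, 0).

Let cinj : injective c := can_inj cK.

Let cadj u v : kadj k u v -> kadj k (c u) (c v).
Proof. exact: (cadjE u v).2. Qed.

Let kadj_pre u y : kadj k (c u) y -> kadj k u (c' y).
Proof. by move=> A; apply/cadjE; rewrite cK'. Qed.

Let c00_nbr y : kadj k (0, 0) y -> kadj k (0, 0) (c' y).
Proof. by rewrite -{1}c00; apply: kadj_pre. Qed.

Lemma kadj_stab00 : (forall x, c x = x) \/
  [/\ c (1, 0) = (-1, 0), c (0, 1) = (0, 1) & c (1, 1) = (-1, 1)].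
Proof.
have c01 : c (0, 1) = (0, 1).
  have no_common y : kadj k (0, 0) y -> kadj k (c (0, 1)) y -> False.
    by move=> /c00_nbr A /kadj_pre B; apply: (no_common_nbr_00_01 hk A B).
  have [//|/eqP N] := eqVneq (c (0, 1)) (0, 1).
  have A : kadj k (0, 0) (c (0, 1)) by rewrite -c00; apply: cadj; kadj_solve.
  exfalso; case: (nbr_00 hk A N) => E; move: no_common; rewrite E => no_common;
    [apply: (no_common (1, -1)) | apply: (no_common (0, -1))
    | apply: (no_common (1, -1)) | apply: (no_common (0, -1))]; kadj_decide hk.
have c10 : c (1, 0) = (1, 0) \/ c (1, 0) = (-1, 0).
  have one_common y1 y2 : kadj k (0, 0) y1 -> kadj k (c (1, 0)) y1 ->
      kadj k (0, 0) y2 -> kadj k (c (1, 0)) y2 -> y1 = y2.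
    have E y : kadj k (0, 0) y -> kadj k (c (1, 0)) y -> c' y = (1, -1).
      by move=> /c00_nbr A /kadj_pre B; apply: (common_nbr_00_10 hk A B).
    by move=> A1 B1 A2 B2; rewrite -[y1]cK' -[y2]cK' !E.
  have A : kadj k (0, 0) (c (1, 0)) by rewrite -c00; apply: cadj; kadj_solve.
  have N : c (1, 0) <> (0, 1) by rewrite -c01 => /cinj.
  case: (nbr_00 hk A N) => E; [by left | by right | exfalso | exfalso].
    suff : (1, -1) = (-1, 0) :> vtx by case; lia.
    by apply: one_common; rewrite ?E; kadj_decide hk.
  suff : (1, 0) = (0, -1) :> vtx by case; lia.
  by apply: one_common; rewrite ?E; kadj_decide hk.
case: c10 => c10; first by left; apply: (kadj_rigid hk cinj cadj).
right; split=> //; apply: (common_nbr_m10_01 hk).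
- by rewrite -c10; apply: cadj; kadj_solve.
- by rewrite -c01; apply: cadj; kadj_solve.
- by rewrite -c00 => /cinj; case; lia.
Qed.

End Stabilizer.

(** * Translations and point reflections *)

Definition transl (p q : int) (x : vtx) : vtx := (x.1 + p, x.2 + q).
Definition prefl (p q : int) (x : vtx) : vtx := (p - x.1, q - x.2).

Lemma translK p q : cancel (transl p q) (transl (- p) (- q)).
Proof. by case=> i j; rewrite /transl /= !addrK. Qed.

Lemma translNK p q : cancel (transl (- p) (- q)) (transl p q).
Proof. by case=> i j; rewrite /transl /= !subrK. Qed.

Lemma preflK p q : involutive (prefl p q).
Proof. by case=> i j; rewrite /prefl /= !subKr. Qed.

Ltac seq_lia :=
  apply/eqP; rewrite /= !eqseq_cons !xpair_eqE /= !eqxx ?andbT; lia.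

Section Symmetries.
Variable k : nat.
Implicit Types (p q i j : int) (u v : vtx).
Local Notation m := (k.+1)%:Z.

Lemma modzN_eq0 q : (q %% m)%Z = 0 -> ((- q) %% m)%Z = 0.
Proof. by move=> Hq; rewrite -modzNm Hq oppr0 mod0z. Qed.

Lemma sq_strip_addr q j : (q %% m)%Z = 0 -> sq_strip k (j + q) = sq_strip k j.
Proof. by move=> Hq; rewrite /sq_strip -modzDmr Hq addr0. Qed.

Lemma sq_strip_subr q j :
  (q %% m)%Z = 1 -> sq_strip k (q - j - 1) = sq_strip k j.
Proof.
move=> Hq; have Hq1 : ((q - 1) %% m)%Z = 0 by rewrite -modzDml Hq subrr mod0z.
rewrite /sq_strip addrAC -modzDml Hq1 add0r.
by rewrite !(sameP eqP dvdz_mod0P) !dvdzE abszN.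
Qed.

Lemma kadj_transl p q u v : (q %% m)%Z = 0 ->
  kadj k u v -> kadj k (transl p q u) (transl p q v).
Proof.
case: u v => [i j] [i' j'] Hq; rewrite /kadj /transl /=.
have S1 := sq_strip_addr j Hq; have S2 := sq_strip_addr (j - 1) Hq.
rewrite addrAC in S2; rewrite S1 S2.
by case: (sq_strip k j); case: (sq_strip k (j - 1)) => /=; lia.
Qed.

Lemma kadj_prefl p q u v : (q %% m)%Z = 1 ->
  kadj k u v -> kadj k (prefl p q u) (prefl p q v).
Proof.
case: u v => [i j] [i' j'] Hq; rewrite /kadj /prefl /=.
have S1 := sq_strip_subr (j - 1) Hq; have S2 := sq_strip_subr j Hq.
rewrite (_ : q - (j - 1) - 1 = q - j) in S1; last by lia.
rewrite S1 S2.
by case: (sq_strip k j); case: (sq_strip k (j - 1)) => /=; lia.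
Qed.

Lemma kadj_translE p q u v : (q %% m)%Z = 0 ->
  kadj k (transl p q u) (transl p q v) <-> kadj k u v.
Proof.
move=> Hq; split; last exact: kadj_transl.
by move/(kadj_transl (- p) (modzN_eq0 Hq)); rewrite !translK.
Qed.

Lemma kadj_preflE p q u v : (q %% m)%Z = 1 ->
  kadj k (prefl p q u) (prefl p q v) <-> kadj k u v.
Proof.
move=> Hq; split; last exact: kadj_prefl.
by move/(kadj_prefl p Hq); rewrite !preflK.
Qed.

Lemma tiling_faceset_transl p q f : (q %% m)%Z = 0 -> tiling_face k f ->
  tiling_faceset k (map (transl p q) f).
Proof.
move=> Hq; case/tiling_faceE => [[i [j [Sj ->]]]|[i [j [Sj [->|->]]]]].
- exists (sq_face (i + p) (j + q)); split.
    by apply: sq_face_tiling; rewrite sq_strip_addr.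
  by rewrite (_ : map _ _ = sq_face (i + p) (j + q)) //; seq_lia.
- exists (tri_lo (i + p) (j + q)); split.
    by apply: tri_lo_tiling; rewrite sq_strip_addr.
  by rewrite (_ : map _ _ = tri_lo (i + p) (j + q)) //; seq_lia.
- exists (tri_hi (i + p) (j + q)); split.
    by apply: tri_hi_tiling; rewrite sq_strip_addr.
  by rewrite (_ : map _ _ = tri_hi (i + p) (j + q)) //; seq_lia.
Qed.

Lemma tiling_faceset_prefl p q f : (q %% m)%Z = 1 -> tiling_face k f ->
  tiling_faceset k (map (prefl p q) f).
Proof.
move=> Hq; case/tiling_faceE => [[i [j [Sj ->]]]|[i [j [Sj [->|->]]]]].
- exists (sq_face (p - i - 1) (q - j - 1)); split.
    by apply: sq_face_tiling; rewrite sq_strip_subr.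
  by rewrite (_ : map _ _ = rot 2 (sq_face (p - i - 1) (q - j - 1)))
    ?perm_rot //; seq_lia.
- exists (tri_hi (p - i - 1) (q - j - 1)); split.
    by apply: tri_hi_tiling; rewrite sq_strip_subr.
  by rewrite (_ : map _ _ = rot 1 (tri_hi (p - i - 1) (q - j - 1)))
    ?perm_rot //; seq_lia.
- exists (tri_lo (p - i - 1) (q - j - 1)); split.
    by apply: tri_lo_tiling; rewrite sq_strip_subr.
  by rewrite (_ : map _ _ = rot 2 (tri_lo (p - i - 1) (q - j - 1)))
    ?perm_rot //; seq_lia.
Qed.

(* The centre (p/2, q/2) of the point reflection is a vertex, the midpoint of
   an edge or the centre of a square, according to the parities of p and q. *)
Lemma prefl_fixes_cell p q :
  (exists u, prefl p q u = u) \/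
  (exists u v, [/\ tiling_adj k u v, prefl p q u = v & prefl p q v = u]) \/
  (exists f, tiling_face k f /\ perm_eq (map (prefl p q) f) f).
Proof.
move: (p %/ 2)%Z (q %/ 2)%Z (divz_eq p 2) (divz_eq q 2) => a b Ep Eq.
have [qe|qo] : (q %% 2)%Z = 0 \/ (q %% 2)%Z = 1 by lia.
all: have [pe|po] : (p %% 2)%Z = 0 \/ (p %% 2)%Z = 1 by lia.
- by left; exists (a, b); rewrite /prefl /=; apply: pair_eqI; lia.
- right; left; exists (a, b), (a + 1, b).
  by split; [apply/tiling_adjE; kadj_solve
            | rewrite /prefl /=; apply: pair_eqI; lia ..].
- right; left; exists (a, b), (a, b + 1).
  by split; [apply/tiling_adjE; kadj_solve
            | rewrite /prefl /=; apply: pair_eqI; lia ..].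
case Sb: (sq_strip k b).
  right; right; exists (sq_face a b); split; first exact: sq_face_tiling.
  by rewrite (_ : map _ _ = rot 2 (sq_face a b)) ?perm_rot //; seq_lia.
have {}Sb : ~~ sq_strip k b by rewrite Sb.
right; left; exists (a + 1, b), (a, b + 1).
by split; [apply/tiling_adjE; kadj_solve
          | rewrite /prefl /=; apply: pair_eqI; lia ..].
Qed.

End Symmetries.

(** * The quotient *)

Section Quotient.
Variables (k : nat) (G : (vtx -> vtx) -> Prop) (V : finType) (n : nat)
  (face : 'I_n -> seq V) (eta : vtx -> V).
Hypothesis hk : k = 2%N \/ k = 3%N.
Hypothesis HG : free_aut_subgroup k G.
Hypothesis HX : is_torus_polyhedral_map face.
Hypothesis HQ : is_quotient_map k G face eta.
Local Notation m := (k.+1)%:Z.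

Let eta_surj x : exists u, eta u = x.
Proof. by case: HQ => H _; apply: H. Qed.

Let eta_eqP u v : eta u = eta v <-> exists g, G g /\ g u = v.
Proof. by case: HQ => _ [H _]; apply: H. Qed.

Let eta_face f : tiling_face k f -> exists i, cyc_eq (map eta f) (face i).
Proof. by case: HQ => _ [_ [_ [H _]]]; apply: H. Qed.

Let face_lift i : exists f, tiling_face k f /\ cyc_eq (map eta f) (face i).
Proof. by case: HQ => _ [_ [_ [_ [H _]]]]; apply: H. Qed.

Let eta_perm_eq f f' : tiling_face k f -> tiling_face k f' ->
  perm_eq (map eta f) (map eta f') -> exists g, G g /\ perm_eq (map g f) f'.
Proof. by case: HQ => _ [_ [_ [_ [_ H]]]] Hf Hf' /(H _ _ Hf Hf'). Qed.

Let face_uniq i : uniq (face i).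
Proof. by case: HX => H _; case: (H i). Qed.

Let face_inj i j : perm_eq (face i) (face j) -> i = j.
Proof. by case: HX => _ [H _]; apply: H. Qed.

Let G_inv g : G g -> exists g', [/\ G g', cancel g g' & cancel g' g].
Proof. by case: HG => _ _ H _ _; apply: H. Qed.

Let G_free g : G g ->
  ((exists u, g u = u) \/
   (exists u v, [/\ tiling_adj k u v, g u = v & g v = u]) \/
   (exists f, tiling_face k f /\ perm_eq (map g f) f)) -> forall x, g x = x.
Proof. by case: HG => _ _ _ _ H; apply: H. Qed.

Let G_kadjE g u v : G g -> kadj k (g u) (g v) <-> kadj k u v.
Proof.
case: HG => _ _ _ Gaut _ /Gaut [_ [_ _ adjE _]].
by rewrite -tiling_adjE -(tiling_adjE k u v); apply: iff_sym.
Qed.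

Let G_faceset g f : G g -> tiling_face k f -> tiling_faceset k (map g f).
Proof.
case: HG => _ _ _ Gaut _ /Gaut [_ [_ _ _ faceE]] Hf.
by apply: (faceE f).1; exists f; split; last exact: perm_refl.
Qed.

Let eta_G g u : G g -> eta (g u) = eta u.
Proof. by move=> Gg; symmetry; apply/eta_eqP; exists g. Qed.

Let map_eta_uniq f i : cyc_eq (map eta f) (face i) -> uniq (map eta f).
Proof. by move/cyc_eq_uniq; apply. Qed.

Lemma fadj_eta x y :
  fadj face x y <-> exists u v, [/\ eta u = x, eta v = y & kadj k u v].
Proof.
split.
  case/existsP=> i; have [f [Hf C]] := face_lift i; have U := map_eta_uniq C.
  rewrite (cyc_eq_uedge _ _ U C) => /(uedge_mapP U) [u [v [E <- <-]]].
  by exists u, v; split=> //; apply: tiling_face_kadj E.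
case=> u [v [<- <- /kadj_tiling_face [f [Hf E]]]].
have [i C] := eta_face Hf; have U := map_eta_uniq C.
by apply/existsP; exists i; rewrite (cyc_eq_uedge _ _ U C); apply: uedge_map_in.
Qed.

Section Descent.

Definition normalizes (s : vtx -> vtx) :=
  forall g, G g -> exists2 g', G g' & forall x, s (g x) = g' (s x).

Let lift_spec x : exists u, eta u == x.
Proof. by have [u <-] := eta_surj x; exists u. Qed.

Let lift x := xchoose (lift_spec x).

Let descend (s : vtx -> vtx) x := eta (s (lift x)).

Let descendE s : normalizes s -> forall u, descend s (eta u) = eta (s u).
Proof.
move=> snorm u; rewrite /descend /lift; set w := xchoose _.
have /eqP/eta_eqP [g [Gg gw]] : eta w == eta u := xchooseP (lift_spec (eta u)).
by rewrite -gw; have [g' Gg' ->] := snorm g Gg; rewrite (eta_G _ Gg').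
Qed.

Let descend_fadj s : normalizes s ->
  (forall u v, kadj k u v -> kadj k (s u) (s v)) ->
  forall x y, fadj face x y -> fadj face (descend s x) (descend s y).
Proof.
move=> snorm sadj x y /fadj_eta [u [v [<- <- A]]]; apply/fadj_eta.
by exists (s u), (s v); rewrite !descendE //; split=> //; apply: sadj.
Qed.

Variables s s' : vtx -> vtx.
Hypothesis sK : cancel s s'.
Hypotheses (sadj : forall u v, kadj k u v -> kadj k (s u) (s v))
           (sadj' : forall u v, kadj k u v -> kadj k (s' u) (s' v)).
Hypothesis sface : forall f, tiling_face k f -> tiling_faceset k (map s f).
Hypotheses (snorm : normalizes s) (snorm' : normalizes s').

Lemma quotient_aut :
  exists a : {perm V}, fin_map_aut face a /\ forall u, a (eta u) = eta (s u).
Proof.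
have descK : cancel (descend s) (descend s').
  by move=> x; have [u <-] := eta_surj x; rewrite !descendE // sK.
have aE u : perm (can_inj descK) (eta u) = eta (s u) by rewrite permE descendE.
exists (perm (can_inj descK)); split=> //; split=> [x y | i]; rewrite ?permE.
  apply/idP/idP; last exact: descend_fadj.
  by move/(descend_fadj snorm' sadj'); rewrite !descK.
have [f [Hf C]] := face_lift i; have [f' [Hf' P]] := sface Hf.
have [j C'] := eta_face Hf'; exists j.
rewrite -(permPr (cyc_eq_perm C')) -(permPl (perm_map _ (cyc_eq_perm C))).
by rewrite -map_comp (eq_map aE) map_comp perm_map.
Qed.

End Descent.

Section Orientation.
Variable o : 'I_n -> bool.
Hypothesis o_coherent : forall i j u v, i != j ->
  dedge (orient face o i) u v -> dedge (orient face o j) u v -> False.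

(* [L] lists the vertices of face [i], and runs along ([b = true]) or against
   the orientation [o i] of that face. *)
Definition oriented (L : seq V) (i : 'I_n) (b : bool) :=
  perm_eq L (face i) /\ forall x y, dedge L x y ->
    dedge (orient face o i) (if b then x else y) (if b then y else x).

Let orient_uniq i : uniq (orient face o i).
Proof. by rewrite /orient; case: (o i); rewrite ?rev_uniq face_uniq. Qed.

Let size_orient i : size (orient face o i) = size (face i).
Proof. by rewrite /orient; case: (o i); rewrite ?size_rev. Qed.

Lemma oriented_image f :
  tiling_face k f -> exists i b, oriented (map eta f) i b.
Proof.
move=> Hf; have [i C] := eta_face Hf; have U := map_eta_uniq C.
have [b0 E] := cyc_eq_dedge U C; exists i, (b0 == o i).
split=> [|x y]; first exact: cyc_eq_perm.
rewrite E {E} /orient; case: (o i); case: b0 => //=.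
all: by rewrite dedge_rev ?face_uniq.
Qed.

Lemma oriented_uniq L i b : oriented L i b -> uniq L.
Proof. by case=> P _; rewrite (perm_uniq P) face_uniq. Qed.

Lemma oriented_face L i i' b b' : oriented L i b -> oriented L i' b' -> i = i'.
Proof. by case=> P _ [P' _]; apply: face_inj; rewrite -(permPl P). Qed.

Lemma oriented_rev L i i' b r : (2 < size L)%N -> oriented L i b ->
  oriented (rot r (rev L)) i' b -> False.
Proof.
move=> L3 OL; have UL := oriented_uniq OL.
case: L L3 UL OL => // x L' L3 UL [P D] [P' D'].
have Ei : i' = i.
  apply: face_inj; rewrite -(permPl P') -(permPr P).
  by rewrite perm_rot perm_rev.
subst i'; have Dxy := dedge_next (mem_head x L').
have Dyx : dedge (rot r (rev (x :: L'))) (next (x :: L') x) x.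
  by rewrite dedge_rot ?rev_uniq // dedge_rev.
have := D _ _ Dxy; have := D' _ _ Dyx; clear D D'.
have Li : (2 < size (orient face o i))%N by rewrite size_orient -(perm_size P).
by case: b => /= D1 D2; apply: (dedge_antisym (orient_uniq i) Li D1 D2).
Qed.

Lemma oriented_sign L i i' b b' : (2 < size L)%N -> oriented L i b ->
  oriented L i' b' -> b = b'.
Proof.
move=> L3 OL OL'; have Ei := oriented_face OL OL'; subst i'.
case: L L3 OL OL' => // x L' L3 [P D] [_ D'].
have Dxy := dedge_next (mem_head x L').
have Li : (2 < size (orient face o i))%N by rewrite size_orient -(perm_size P).
move: (D _ _ Dxy) (D' _ _ Dxy); clear D D'.
by case: b; case: b' => //= D1 D2;
  case: (dedge_antisym (orient_uniq i) Li D1 D2).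
Qed.

Definition same_sign (f f' : seq vtx) := forall i b i' b',
  oriented (map eta f) i b -> oriented (map eta f') i' b' -> b = b'.

Lemma same_sign_refl f : tiling_face k f -> same_sign f f.
Proof.
move=> Hf i b i' b'; apply: oriented_sign.
by rewrite size_map (tiling_face_size Hf).
Qed.

Lemma same_sign_sym f f' : same_sign f f' -> same_sign f' f.
Proof. by move=> S i b i' b' O O'; rewrite (S _ _ _ _ O' O). Qed.

Lemma same_sign_trans f1 f2 f3 : tiling_face k f2 ->
  same_sign f1 f2 -> same_sign f2 f3 -> same_sign f1 f3.
Proof.
move=> Hf2 S12 S23 i b i' b' O1 O3; have [j [c O2]] := oriented_image Hf2.
by rewrite (S12 _ _ _ _ O1 O2) (S23 _ _ _ _ O2 O3).
Qed.

(* Two distinct faces of K through the edge uv induce opposite orientations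
   on it; they cannot have the same image in X, since the element of G that
   would identify them fixes the vertex u. *)
Lemma same_sign_adjacent f f' u v w : tiling_face k f -> tiling_face k f' ->
  dedge f u v -> dedge f' v u -> w \in f' -> w \notin f -> same_sign f f'.
Proof.
move=> Hf Hf' Duv Dvu wf' wf i b i' b' [P D] [P' D'].
have U : uniq (map eta f) by rewrite (perm_uniq P).
have U' : uniq (map eta f') by rewrite (perm_uniq P').
have E := D _ _ (dedge_map_in U Duv); have E' := D' _ _ (dedge_map_in U' Dvu).
clear D D'; case: (b =P b') => // /eqP Nb; exfalso.
have [Ei | Ni] := eqVneq i i'; last first.
  move: Nb E E'; case: b; case: b' => //= _ E E'.
    exact: o_coherent Ni E E'.
  exact: o_coherent Ni E E'.
subst i'; have /eta_perm_eq [] // : perm_eq (map eta f) (map eta f').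
  by rewrite (permPl P) perm_sym.
move=> g [Gg Pg]; have [_ uf'] := dedge_mem Dvu; have [uf _] := dedge_mem Duv.
have /mapP [u' u'f gu'] : u \in map g f by rewrite (perm_mem Pg).
have u'u : u' = u by apply: (uniq_map_inj_in U) => //; rewrite gu' eta_G.
have gid : forall x, g x = x.
  by apply: G_free => //; left; exists u; rewrite -{1}u'u.
by move: wf'; rewrite -(perm_mem Pg) (eq_map gid) map_id (negbTE wf).
Qed.

Ltac mem_lia := rewrite /sq_face /tri_lo /tri_hi !inE !xpair_eqE /=; lia.

Lemma same_sign_sq_right i j : sq_strip k j ->
  same_sign (sq_face i j) (sq_face (i + 1) j).
Proof.
move=> Sj; apply: (same_sign_adjacent (u := (i + 1, j)) (v := (i + 1, j + 1))
  (w := (i + 2, j))); [exact: sq_face_tiling | exact: sq_face_tiling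
  | by case/dedge4: (sq_face_uniq i j)
  | by case/dedge4: (sq_face_uniq (i + 1) j)
  | mem_lia ..].
Qed.

Lemma same_sign_sq_tri i j : sq_strip k j -> ~~ sq_strip k (j + 1) ->
  same_sign (sq_face i j) (tri_lo i (j + 1)).
Proof.
move=> Sj Sj1.
apply: (same_sign_adjacent (u := (i + 1, j + 1)) (v := (i, j + 1))
  (w := (i, j + 2))); [exact: sq_face_tiling | exact: tri_lo_tiling
  | by case/dedge4: (sq_face_uniq i j) | by case/dedge3: (tri_lo_uniq i (j + 1))
  | mem_lia ..].
Qed.

Lemma same_sign_tri i j :
  ~~ sq_strip k j -> same_sign (tri_lo i j) (tri_hi i j).
Proof.
move=> Sj; apply: (same_sign_adjacent (u := (i + 1, j)) (v := (i, j + 1))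
  (w := (i + 1, j + 1))); [exact: tri_lo_tiling | exact: tri_hi_tiling
  | by case/dedge3: (tri_lo_uniq i j) | by case/dedge3: (tri_hi_uniq i j)
  | mem_lia ..].
Qed.

Lemma same_sign_tri_up i j : ~~ sq_strip k j -> ~~ sq_strip k (j + 1) ->
  same_sign (tri_hi i j) (tri_lo i (j + 1)).
Proof.
move=> Sj Sj1.
apply: (same_sign_adjacent (u := (i + 1, j + 1)) (v := (i, j + 1))
  (w := (i, j + 2))); [exact: tri_hi_tiling | exact: tri_lo_tiling
  | by case/dedge3: (tri_hi_uniq i j) | by case/dedge3: (tri_lo_uniq i (j + 1))
  | mem_lia ..].
Qed.

Lemma same_sign_tri_sq i j : ~~ sq_strip k j -> sq_strip k (j + 1) ->
  same_sign (tri_hi i j) (sq_face i (j + 1)).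
Proof.
move=> Sj Sj1.
apply: (same_sign_adjacent (u := (i + 1, j + 1)) (v := (i, j + 1))
  (w := (i + 1, j + 2))); [exact: tri_hi_tiling | exact: sq_face_tiling
  | by case/dedge3: (tri_hi_uniq i j) | by case/dedge4: (sq_face_uniq i (j + 1))
  | mem_lia ..].
Qed.

Lemma same_sign_sq_up i j : sq_strip k j ->
  same_sign (sq_face i j) (sq_face i (j + m)).
Proof.
move=> Sj; have tri t : (t < k)%N -> ~~ sq_strip k (j + t%:Z + 1).
  by move: Sj; rewrite /sq_strip; case: hk => ->; lia.
have col t : (t < k)%N -> same_sign (sq_face i j) (tri_hi i (j + t%:Z + 1)).
  elim: t => [|t IH] ltk.
    have S1 := tri 0%N ltk; rewrite addr0 in S1 *.
    exact: same_sign_trans (tri_lo_tiling i S1) (same_sign_sq_tri Sj S1)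
      (same_sign_tri S1).
  have S := tri t (ltnW ltk); have S' := tri t.+1 ltk.
  rewrite (_ : j + t.+1%:Z + 1 = j + t%:Z + 1 + 1) in S' *; last by lia.
  apply: same_sign_trans (tri_lo_tiling i S') _ (same_sign_tri S').
  exact: same_sign_trans (tri_hi_tiling i S) (IH (ltnW ltk))
    (same_sign_tri_up S S').
have ltk : (k.-1 < k)%N by case: hk => ->.
have Sk := tri _ ltk.
have Sk1 : sq_strip k (j + k.-1%:Z + 1 + 1).
  by move: Sj; rewrite /sq_strip; case: hk => -> /=; lia.
rewrite (_ : j + m = j + k.-1%:Z + 1 + 1); last by case: hk => -> /=; lia.
exact: same_sign_trans (tri_hi_tiling i Sk) (col _ ltk)
  (same_sign_tri_sq Sk Sk1).
Qed.

Lemma same_sign_sq i j : sq_strip k j -> same_sign (sq_face 0 0) (sq_face i j).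
Proof.
have Sm c : sq_strip k (c * m) by rewrite /sq_strip modzMl.
have rows c : same_sign (sq_face 0 0) (sq_face 0 (c * m)).
  elim/int_ind_step: c => [|c IH|c IH].
  - exact/same_sign_refl/sq_face_tiling.
  - apply: same_sign_trans (sq_face_tiling 0 (Sm c)) IH _.
    by rewrite mulrDl mul1r; apply: same_sign_sq_up.
  - apply: same_sign_trans (sq_face_tiling 0 (Sm c)) IH (same_sign_sym _).
    have := same_sign_sq_up (i := 0) (Sm (c - 1)).
    by rewrite mulrBl mul1r subrK.
move=> Sj; have /eqP Ej : j == (j %/ m)%Z * m.
  by rewrite {1}(divz_eq j m) (eqP Sj) addr0.
apply: same_sign_trans (sq_face_tiling 0 Sj) _ _; first by rewrite Ej.
elim/int_ind_step: i => [|i IH|i IH]; first exact/same_sign_refl/sq_face_tiling.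
  exact: same_sign_trans (sq_face_tiling i Sj) IH
    (same_sign_sq_right (i := i) Sj).
apply: same_sign_trans (sq_face_tiling i Sj) IH (same_sign_sym _).
by have := same_sign_sq_right (i := i - 1) Sj; rewrite subrK.
Qed.

Lemma G_no_reflected_square g i j r : G g -> sq_strip k j ->
  map g (sq_face 0 0) = rot r (rev (sq_face i j)) -> False.
Proof.
move=> Gg Sj Eg.
have [i0 [b0 O0]] := oriented_image (sq_face_tiling 0 (sq_strip0 k)).
have [i1 [b1 O1]] := oriented_image (sq_face_tiling i Sj).
have E0 : map eta (sq_face 0 0) = rot r (rev (map eta (sq_face i j))).
  by rewrite -(eq_map (fun u => eta_G u Gg)) map_comp Eg map_rot map_rev.
have Eb := same_sign_sq Sj O0 O1; rewrite -{}Eb in O1; rewrite {}E0 in O0.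
by apply: oriented_rev O1 O0; rewrite size_map.
Qed.

End Orientation.

Let X_orientable : exists o : 'I_n -> bool, forall i j u v, i != j ->
  dedge (orient face o i) u v -> dedge (orient face o j) u v -> False.
Proof. by case: HX => _ [_ [_ [_ [_ [_ [_ [H _]]]]]]]. Qed.

Let G_reflected_square g i j r : G g -> sq_strip k j ->
  map g (sq_face 0 0) = rot r (rev (sq_face i j)) -> False.
Proof. by have [o Ho] := X_orientable; apply: (G_no_reflected_square Ho). Qed.

Lemma G_row00 g : G g -> ((g (0, 0)).2 %% m)%Z = 0 \/ ((g (0, 0)).2 %% m)%Z = 1.
Proof.
move=> Gg; have [f [Hf P]] := G_faceset Gg (sq_face_tiling 0 (sq_strip0 k)).
have S4 : size f = 4%N by rewrite -(perm_size P) size_map.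
have [i [j [Sj Ef]]] := tiling_face_size4 Hf S4.
apply: (sq_face_row hk (i := i) Sj).
by rewrite -Ef -(perm_mem P); apply: map_f; rewrite inE eqxx.
Qed.

Let G_stab g h h' : G g -> cancel h h' -> cancel h' h ->
  (forall u v, kadj k (h u) (h v) <-> kadj k u v) -> h (g (0, 0)) = (0, 0) ->
  (forall x, h (g x) = x) \/
  [/\ h (g (1, 0)) = (-1, 0), h (g (0, 1)) = (0, 1) & h (g (1, 1)) = (-1, 1)].
Proof.
move=> Gg hK hK' hadj h00; have [g' [_ gK gK']] := G_inv Gg.
apply: (kadj_stab00 hk (c := fun x => h (g x)) (c' := fun x => g' (h' x))).
- by move=> x; rewrite hK gK.
- by move=> x; rewrite gK' hK'.
- by move=> u v; rewrite hadj G_kadjE.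
- exact: h00.
Qed.

Let G_transl_row0 g p q : G g -> g (0, 0) = (p, q) -> (q %% m)%Z = 0 ->
  forall x, g x = transl p q x.
Proof.
move=> Gg E00 Hq.
have gE x y : transl (- p) (- q) (g x) = y -> g x = transl p q y.
  by move=> <-; rewrite translNK.
have := G_stab Gg (translNK p q) (translK p q)
  (fun u v => kadj_translE (- p) u v (modzN_eq0 Hq)).
case=> [|Eid|[/gE E10 /gE E01 /gE E11]]; first by rewrite E00 /transl /= !subrr.
  by move=> x; apply: gE.
exfalso; apply: (G_reflected_square (i := p - 1) (j := q) (r := 2) Gg).
  by rewrite /sq_strip Hq.
by rewrite /sq_face /= !add0r E00 E10 E01 E11; seq_lia.
Qed.

(* Such a g would be a point reflection, which fixes a cell of K, or a
   point reflection composed with a mirror, which reverses orientation. *)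
Let G_not_row1 g p q : G g -> g (0, 0) = (p, q) -> (q %% m)%Z = 1 -> False.
Proof.
move=> Gg E00 Hq.
have gE x y : prefl p q (g x) = y -> g x = prefl p q y.
  by move=> <-; rewrite preflK.
have := G_stab Gg (preflK p q) (preflK p q) (fun u v => kadj_preflE p u v Hq).
case=> [|Eid|[/gE E10 /gE E01 /gE E11]]; first by rewrite E00 /prefl /= !subrr.
  have gP x : g x = prefl p q x by apply: gE.
  have gid : forall x, g x = x.
    apply: G_free => //.
    case: (prefl_fixes_cell k p q) => [[u Pu]|[[u [v [A Pu Pv]]]|[f [Hf P]]]].
    - by left; exists u; rewrite gP.
    - by right; left; exists u, v; rewrite !gP.
    - by right; right; exists f; rewrite (eq_map gP).
  by move: Hq; rewrite -[q]/((p, q).2) -E00 gid mod0z.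
apply: (G_reflected_square (i := p) (j := q - 1) (r := 0) Gg).
  by move: Hq; rewrite /sq_strip; case: hk => ->; lia.
by rewrite /sq_face /= !add0r E00 E10 E01 E11; seq_lia.
Qed.

Lemma G_transl g : G g ->
  exists p q, (q %% m)%Z = 0 /\ forall x, g x = transl p q x.
Proof.
move=> Gg; case E00 : (g (0, 0)) => [p q].
have := G_row00 Gg; rewrite E00 /= => -[Hq|Hq].
  by exists p, q; split=> //; apply: G_transl_row0.
by case: (G_not_row1 Gg E00 Hq).
Qed.

Lemma normalizes_transl p q : normalizes (transl p q).
Proof.
move=> g Gg; exists g => // x; have [p' [q' [_ gE]]] := G_transl Gg.
by rewrite !gE /transl /=; apply: pair_eqI; lia.
Qed.

Lemma normalizes_prefl p q : normalizes (prefl p q).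
Proof.
move=> g Gg; have [g' [Gg' gK gK']] := G_inv Gg; exists g' => // x.
have [p' [q' [_ gE]]] := G_transl Gg.
have g'E y : g' y = transl (- p') (- q') y.
  by rewrite -[y in LHS](translNK p' q') -gE gK.
by rewrite gE g'E /transl /prefl /=; apply: pair_eqI; lia.
Qed.

Lemma same_aut_orbit_transl p q x : (q %% m)%Z = 0 ->
  same_aut_orbit face (eta x) (eta (transl p q x)).
Proof.
move=> Hq; have [a [Ha aE]] := quotient_aut (translK p q)
  (fun u v => kadj_transl p Hq) (fun u v => kadj_transl (- p) (modzN_eq0 Hq))
  (fun f => tiling_faceset_transl p Hq) (normalizes_transl p q)
  (normalizes_transl (- p) (- q)).
by exists a.
Qed.

Lemma same_aut_orbit_prefl p q x : (q %% m)%Z = 1 ->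
  same_aut_orbit face (eta x) (eta (prefl p q x)).
Proof.
move=> Hq; have [a [Ha aE]] := quotient_aut (preflK p q)
  (fun u v => kadj_prefl p Hq) (fun u v => kadj_prefl p Hq)
  (fun f => tiling_faceset_prefl p Hq) (normalizes_prefl p q)
  (normalizes_prefl p q).
by exists a.
Qed.

Lemma same_aut_orbit_cover x : same_aut_orbit face (eta (0, 0)) (eta x) \/
  same_aut_orbit face (eta (0, 2)) (eta x).
Proof.
case: x => i j.
have [[H|H]|[H|H]] : ((j %% m)%Z = 0 \/ (j %% m)%Z = 1) \/
    (((j - 2) %% m)%Z = 0 \/ ((j + 2) %% m)%Z = 1).
  by case: hk => ->; lia.
- by left; have := same_aut_orbit_transl i (0, 0) H; rewrite /transl /= !add0r.
- by left; have := same_aut_orbit_prefl i (0, 0) H; rewrite /prefl /= !subr0.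
- right; have := same_aut_orbit_transl i (0, 2) H; rewrite /transl /= add0r.
  by rewrite addrC subrK.
- right; have := same_aut_orbit_prefl i (0, 2) H; rewrite /prefl /= subr0.
  by rewrite addrK.
Qed.

(* A vertex on a square of K is never G-equivalent to one on row 2 mod k+1,
   which lies on triangles only. *)
Lemma not_same_aut_orbit_00_02 :
  ~ same_aut_orbit face (eta (0, 0)) (eta (0, 2)).
Proof.
case=> a [[_ aface] Ea].
have [i C] := eta_face (sq_face_tiling 0 (sq_strip0 k)).
have [j P] := aface i.
have mem02 : eta (0, 2) \in face j.
  rewrite -(perm_mem P) -Ea map_f // -(perm_mem (cyc_eq_perm C)).
  by apply: map_f; rewrite inE eqxx.
have [f [Hf C']] := face_lift j.
have S4 : size f = 4%N.
  rewrite -(size_map eta) (perm_size (cyc_eq_perm C')) -(perm_size P).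
  by rewrite size_map -(perm_size (cyc_eq_perm C)) size_map.
have [i' [j' [Sj' Ef]]] := tiling_face_size4 Hf S4.
move: mem02; rewrite -(perm_mem (cyc_eq_perm C')).
case/mapP=> w wf /eta_eqP [g [Gg gw]].
have [p [q [Hq gE]]] := G_transl Gg; rewrite gE /transl in gw.
have := sq_face_row hk Sj' (i := i'); rewrite -Ef => /(_ _ wf).
case: w gw {wf} => a1 b1 [_ E2].
by move: Hq; rewrite /= -E2; case: hk => ->; lia.
Qed.

End Quotient.

Local Close Scope ring_scope.

Theorem theorem1 (k : nat) (hk : k = 2%N \/ k = 3%N)
    (G : (vtx -> vtx) -> Prop) (V : finType) (n : nat)
    (face : 'I_n -> seq V) (eta : vtx -> V) :
  free_aut_subgroup k G ->
  is_torus_polyhedral_map face ->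
  is_quotient_map k G face eta ->
  exists u v : V,
    ~ same_aut_orbit face u v /\
    forall w : V, same_aut_orbit face u w \/ same_aut_orbit face v w.
Proof.
move=> HG HX HQ; exists (eta (0, 0)%R), (eta (0, 2)%R); split.
  exact: not_same_aut_orbit_00_02 hk HG HX HQ.
move=> w; have [x <-] : exists x, eta x = w by case: HQ => H _; apply: H.
exact: same_aut_orbit_cover hk HG HX HQ x.
Qed.
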